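(* Let $E$ be an arbitrary directed graph and $K$ a field with involution. The Leavitt path algebra $L_K(E)$ is positive definite if and only if $K$ is positive definite.
   Context: A directed graph $E=(E^0,E^1,s,r)$ has vertex set $E^0$, edge set $E^1$ (arbitrary cardinalities) and source/range maps $s,r:E^1\to E^0$. A vertex $v$ is regular if $s^{-1}(v)$ is nonempty and finite. For a field $K$, $L_K(E)$ is the free $K$-algebra on $E^0\cup E^1\cup\{e^*: e\in E^1\}$ modulo: $vw=\delta_{v,w}v$ for $v,w\in E^0$; $s(e)e=er(e)=e$; $r(e)e^*=e^*s(e)=e^*$; $e^*f=\delta_{e,f}r(e)$ for $e,f\in E^1$; $v=\sum_{e\in s^{-1}(v)}ee^*$ for every regular vertex $v$. If $K$ has an involution $k\mapsto k^*$ (e.g. the identity), $L_K(E)$ is a $*$-algebra via $(\sum k_ia_ib_i^* )^*=\sum k_i^*b_ia_i^*$ for paths $a_i,b_i$ (with $(e_1\cdots e_n)^*=e_n^*\cdots e_1^*$, $v^*=v$). A $*$-ring (or $*$-field) is positive definite if for all $n$ and $x_1,\dots,x_n$, $\sum_{i=1}^n x_ix_i^*=0$ implies $x_i=0$ for all $i$. *)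

From HB Require Import structures.
From mathcomp Require Import all_boot all_order all_algebra.
From Stdlib Require List.
Set Implicit Arguments. Unset Strict Implicit. Unset Printing Implicit Defensive.
Import GRing.Theory.
Local Open Scope ring_scope.

Definition is_involution (K : fieldType) (cj : {rmorphism K -> K}) : Prop :=
  forall k : K, cj (cj k) = k.

Definition field_pos_def (K : fieldType) (cj : K -> K) : Prop :=
  forall ks : seq K, \sum_(k <- ks) k * cj k = 0 -> forall k, k \in ks -> k = 0.

(* Generators of the free algebra: vertices, real edges, ghost edges e^*. *)
Inductive gen (V Ed : Type) : Type :=
| GV of V
| GE of Ed
| GS of Ed.

(* Syntax of the free (non-unital, associative) K-algebra on a set G of
   generators. *)
Inductive fterm (K G : Type) : Type :=
| TGen of G
| TZero
| TAdd of fterm K G & fterm K G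
| TScale of K & fterm K G
| TMul of fterm K G & fterm K G.

Arguments TZero {K G}.

Fixpoint tsum (K G : Type) (l : list (fterm K G)) : fterm K G :=
  match l with
  | nil => TZero
  | cons t l' => TAdd t (tsum l')
  end.

Section LPA.
Variables (K : fieldType) (V Ed : Type) (s r : Ed -> V).

Notation T := (fterm K (gen V Ed)).
Notation v_ v := (@TGen K (gen V Ed) (GV Ed v)).
Notation e_ e := (@TGen K (gen V Ed) (GE V e)).
Notation es_ e := (@TGen K (gen V Ed) (GS V e)).

Inductive leavitt_rel : T -> T -> Prop :=
| LR_vv v : leavitt_rel (TMul (v_ v) (v_ v)) (v_ v)
| LR_vw v w : v <> w -> leavitt_rel (TMul (v_ v) (v_ w)) TZero
| LR_se e : leavitt_rel (TMul (v_ (s e)) (e_ e)) (e_ e)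
| LR_er e : leavitt_rel (TMul (e_ e) (v_ (r e))) (e_ e)
| LR_re e : leavitt_rel (TMul (v_ (r e)) (es_ e)) (es_ e)
| LR_es e : leavitt_rel (TMul (es_ e) (v_ (s e))) (es_ e)
| LR_CK1 e : leavitt_rel (TMul (es_ e) (e_ e)) (v_ (r e))
| LR_CK1' e f : e <> f -> leavitt_rel (TMul (es_ e) (e_ f)) TZero
(* CK2 at a regular vertex v: l enumerates s^{-1}(v) without repetition,
   and is nonempty. *)
| LR_CK2 v (l : list Ed) :
    l <> nil -> List.NoDup l -> (forall e, s e = v <-> List.In e l) ->
    leavitt_rel (v_ v) (tsum (List.map (fun e => TMul (e_ e) (es_ e)) l)).

(* Equality in L_K(E): the congruence generated by the axioms of an
   associative K-algebra together with the Leavitt relations. *)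
Inductive lpa_eq : T -> T -> Prop :=
| Q_rel a b : leavitt_rel a b -> lpa_eq a b
| Q_refl a : lpa_eq a a
| Q_sym a b : lpa_eq a b -> lpa_eq b a
| Q_trans a b c : lpa_eq a b -> lpa_eq b c -> lpa_eq a c
| Q_add a a' b b' : lpa_eq a a' -> lpa_eq b b' -> lpa_eq (TAdd a b) (TAdd a' b')
| Q_scale k a a' : lpa_eq a a' -> lpa_eq (TScale k a) (TScale k a')
| Q_mul a a' b b' : lpa_eq a a' -> lpa_eq b b' -> lpa_eq (TMul a b) (TMul a' b')
| Q_addA a b c : lpa_eq (TAdd a (TAdd b c)) (TAdd (TAdd a b) c)
| Q_addC a b : lpa_eq (TAdd a b) (TAdd b a)
| Q_add0 a : lpa_eq (TAdd TZero a) a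
| Q_addN a : lpa_eq (TAdd a (TScale (-1) a)) TZero
| Q_scaleDr k a b : lpa_eq (TScale k (TAdd a b)) (TAdd (TScale k a) (TScale k b))
| Q_scaleDl k l a : lpa_eq (TScale (k + l) a) (TAdd (TScale k a) (TScale l a))
| Q_scaleA k l a : lpa_eq (TScale (k * l) a) (TScale k (TScale l a))
| Q_scale1 a : lpa_eq (TScale 1 a) a
| Q_mulA a b c : lpa_eq (TMul a (TMul b c)) (TMul (TMul a b) c)
| Q_mulDl a b c : lpa_eq (TMul (TAdd a b) c) (TAdd (TMul a c) (TMul b c))
| Q_mulDr a b c : lpa_eq (TMul a (TAdd b c)) (TAdd (TMul a b) (TMul a c))
| Q_scalel k a b : lpa_eq (TMul (TScale k a) b) (TScale k (TMul a b))
| Q_scaler k a b : lpa_eq (TMul a (TScale k b)) (TScale k (TMul a b)).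

Fixpoint tstar (cj : K -> K) (t : T) : T :=
  match t with
  | TGen (GV v) => v_ v
  | TGen (GE e) => es_ e
  | TGen (GS e) => e_ e
  | TZero => TZero
  | TAdd a b => TAdd (tstar cj a) (tstar cj b)
  | TScale k a => TScale (cj k) (tstar cj a)
  | TMul a b => TMul (tstar cj b) (tstar cj a)
  end.

Definition lpa_pos_def (cj : K -> K) : Prop :=
  forall xs : list T,
    lpa_eq (tsum (List.map (fun x => TMul x (tstar cj x)) xs)) TZero ->
    forall x, List.In x xs -> lpa_eq x TZero.

End LPA.

From HB Require Import structures.
From mathcomp Require Import all_boot all_order all_algebra.
From mathcomp Require Import ring zify.
From Stdlib Require Import ClassicalEpsilon FunctionalExtensionality ProofIrrelevance Setoid Morphisms.
Set Implicit Arguments. Unset Strict Implicit. Unset Printing Implicit Defensive.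
Import GRing.Theory.
Local Open Scope ring_scope.

(** L_K(E) acts on K-valued functions on the set of maximal paths of E
   ("rays"): an edge e shifts a ray starting with e, a ghost edge e^*
   prepends e.  This action is faithful: by CK2 every element is a
   combination of monomials p q^* in which a path p shorter than the longest
   one ends at a non-regular vertex, and a ray through the shortest such p,
   leaving it by an edge that no longer p uses, isolates the coefficient of
   that monomial.  For the sesquilinear form <f, g> = sum_xi f xi * cj (g xi)
   on finitely supported functions, [tstar] is the adjoint, so evaluating
   sum_i x_i x_i^* on the point mass at xi, at xi, yields
   sum_i <x_i^* delta_xi, x_i^* delta_xi>, a sum of terms k * cj k.  Hence if
   K is positive definite and sum_i x_i x_i^* = 0, every x_i^* vanishes on
   point masses, so x_i^* = 0 by faithfulness and x_i = 0.  Conversely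
   k |-> k v embeds K into L_K(E) compatibly with the involutions. *)

Lemma List_mapE (A B : Type) (f : A -> B) (l : seq A) : List.map f l = map f l.
Proof. by elim: l => //= a l ->. Qed.

Definition all_In (A : Type) (P : A -> Prop) (l : seq A) := forall x, List.In x l -> P x.

Lemma all_In_cat (A : Type) (P : A -> Prop) (l1 l2 : seq A) :
  all_In P l1 -> all_In P l2 -> all_In P (l1 ++ l2).
Proof.
by move=> H1 H2 x Hx; case: (List.in_app_or _ _ _ Hx); [exact: H1|exact: H2].
Qed.

Lemma all_In_map (A B : Type) (P : B -> Prop) (f : A -> B) (l : seq A) :
  all_In (fun x => P (f x)) l -> all_In P (map f l).
Proof.
by move=> H y; rewrite -List_mapE => /List.in_map_iff [x [<- Hx]]; exact: H.
Qed.

Lemma In_filter (A : Type) (P : pred A) (l : seq A) x :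
  List.In x (filter P l) -> List.In x l /\ P x.
Proof.
elim: l => [//|a l IH] /=; case: ifP => Pa /=.
- by move=> [<-|/IH[Hx Px]]; split; [left|by []|right|].
- by move=> /IH[Hx Px]; split; [right|].
Qed.

Lemma size_filterC_lt (A : Type) (P : pred A) (l : seq A) x :
  List.In x l -> P x -> (size (filter (predC P) l) < size l)%N.
Proof.
elim: l => [//|a l IH] /= [<-|Hx] Px.
- by rewrite Px ltnS size_filter count_size.
- by case: (P a) => /=; [exact: leq_trans (IH Hx Px) _ | rewrite ltnS IH].
Qed.

Lemma exists_argmin_In (A : Type) (m : A -> nat) (l : seq A) : l <> [::] ->
  exists2 x, List.In x l & forall y, List.In y l -> (m x <= m y)%N.
Proof.
elim: l => [//|a [|b l] IH] _; first by exists a => [|y [<-|]]; [left| |].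
have [x Hx Hmin] := IH (fun E => ltac:(discriminate E)).
case: (leqP (m a) (m x)) => Ha.
- exists a => [|y [<-|/Hmin]]; [by left|by []|exact: leq_trans].
- exists x => [|y [<-|/Hmin]]; [by right|exact: ltnW|by []].
Qed.

Lemma leq_bigmax_In (A : Type) (F : A -> nat) (l : seq A) x :
  List.In x l -> (F x <= \max_(y <- l) F y)%N.
Proof.
elim: l => [//|a l IH] /= [->|/IH Hx]; rewrite big_cons ?leq_maxl //.
exact: leq_trans Hx (leq_maxr _ _).
Qed.

Lemma exists_NoDup_filter (A : Type) (l : seq A) (P : A -> Prop) :
  exists2 l', List.NoDup l' & forall x, List.In x l' <-> List.In x l /\ P x.
Proof.
elim: l => [|a l [l' Hnd Hl]]; first by exists [::] => [|x]; [constructor|split => [|[]]].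
case: (classic (P a /\ ~ List.In a l')) => [[Pa Na]|H].
- exists (a :: l'); first by constructor.
  move=> x; split => [[<-|/Hl[]]|[[<-|Hx] Px]]; by [split; [left|]|split; [right|]|left|right; apply/Hl].
- exists l' => // x; split => [/Hl[]|[[<-|Hx] Px]]; [by split; [right|]| |by apply/Hl].
  by apply: NNPP => Hn; apply: H.
Qed.

Lemma mem_In (A : eqType) (l : seq A) x : x \in l -> List.In x l.
Proof. by elim: l => [|a l IH] //=; rewrite in_cons => /orP [/eqP ->|/IH]; [left|right]. Qed.

Lemma nth_error_size_cat (A : Type) (l l' : seq A) x :
  List.nth_error (l ++ x :: l') (size l) = Some x.
Proof. by elim: l. Qed.

Lemma eq_big_In (R : Type) (idx : R) (op : R -> R -> R) (A : Type) (l : seq A) (F G : A -> R) :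
  (forall x, List.In x l -> F x = G x) ->
  \big[op/idx]_(x <- l) F x = \big[op/idx]_(x <- l) G x.
Proof.
elim: l => [|a l IH] H; rewrite ?big_nil // !big_cons H ?IH //; last by left.
by move=> x Hx; apply: H; right.
Qed.

Definition decide (P : Prop) : bool := if excluded_middle_informative P then true else false.

Lemma decideP (P : Prop) : reflect P (decide P).
Proof. by rewrite /decide; case: excluded_middle_informative => H; constructor. Qed.

Section Indicator.
Variable R : pzSemiRingType.

Definition ind (P : Prop) : R := if decide P then 1 else 0.

Lemma indT (P : Prop) : P -> ind P = 1.
Proof. by rewrite /ind; case: decideP. Qed.

Lemma indF (P : Prop) : ~ P -> ind P = 0.
Proof. by rewrite /ind; case: decideP. Qed.

Lemma ind_and (P Q : Prop) : ind (P /\ Q) = ind P * ind Q.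
Proof.
rewrite /ind; case: (decideP (P /\ Q)); case: decideP; case: decideP;
  rewrite ?mulr1 ?mulr0 //; tauto.
Qed.

Lemma mul_ind_idem (P : Prop) : ind P * ind P = ind P.
Proof. by rewrite /ind; case: decideP; rewrite ?mulr1 ?mulr0. Qed.

Lemma eq_ind (P Q : Prop) : (P <-> Q) -> ind P = ind Q.
Proof. by move=> PQ; rewrite /ind; case: decideP; case: decideP; tauto. Qed.

Lemma sum_ind_eq_notIn (A : Type) (l : seq A) (f : A) (c : R) : ~ List.In f l ->
  \sum_(e <- l) ind (e = f) * c = 0.
Proof.
elim: l => [|a l IH] /= Hn; rewrite ?big_nil // big_cons indF; last by move=> E; apply: Hn; left.
by rewrite mul0r add0r IH // => H; apply: Hn; right.
Qed.

Lemma sum_ind_eq_In (A : Type) (l : seq A) (f : A) (c : R) : List.NoDup l -> List.In f l ->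
  \sum_(e <- l) ind (e = f) * c = c.
Proof.
elim: l => [|a l IH] //= /List.NoDup_cons_iff [Ha Hnd] Hin; rewrite big_cons.
case: (classic (a = f)) => [<-|E].
- by rewrite indT // mul1r sum_ind_eq_notIn ?addr0.
- by rewrite indF // mul0r add0r IH //; case: Hin.
Qed.

End Indicator.

Arguments ind {R} P.

Lemma rmorph_ind (K : fieldType) (cj : {rmorphism K -> K}) (P : Prop) :
  cj (ind P) = ind P.
Proof. by rewrite /ind; case: decide; rewrite ?rmorph1 ?rmorph0. Qed.

(* Grouping the terms of sum_p p.1 delta_{p.2} by their point p.2 turns its
   norm into a sum of norms of the grouped coefficients. *)
Lemma double_sum_norms (K : fieldType) (cj : {rmorphism K -> K}) (X : Type)
    (F : seq (K * X)) :
  exists ks : seq K,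
  \sum_(p <- F) \sum_(p' <- F) p.1 * (cj p'.1 * ind (p'.2 = p.2)) = \sum_(k <- ks) k * cj k /\
  ((forall k, k \in ks -> k = 0) -> forall q, \sum_(p <- F) p.1 * ind (p.2 = q) = 0).
Proof.
have [n] := ubnP (size F); elim: n F => // n IH [|p0 F'] /ltnSE Hs.
  by exists [::]; split; [rewrite !big_nil | move=> _ q; rewrite big_nil].
set F := p0 :: F'.
pose P : pred (K * X) := fun p => decide (p.2 = p0.2).
have [|ksR [ER HR]] := IH (filter (predC P) F).
  rewrite /F /= /P; case: decideP => //= _.
  by rewrite size_filter; apply: leq_trans Hs; rewrite ltnS count_size.
have BR f : \sum_(p <- filter (predC P) F) f p = \sum_(p <- F | ~~ P p) f p by rewrite big_filter.
move: ER HR BR; set R := filter (predC P) F => ER HR BR.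
clearbody R F.
pose G := \sum_(p <- F | P p) p.1.
have D1 p : P p -> \sum_(p' <- F) p.1 * (cj p'.1 * ind (p'.2 = p.2)) = p.1 * cj G.
  move=> /decideP Pp; rewrite (bigID P) /= [X in _ + X]big1 ?addr0; last first.
    by move=> p' /decideP Hp'; rewrite indF ?mulr0 // => E; apply: Hp'; rewrite E.
  rewrite /G rmorph_sum mulr_sumr; apply: eq_bigr => p' /decideP Pp'.
  by rewrite indT ?mulr1 // Pp Pp'.
have D2 p : ~~ P p -> \sum_(p' <- F) p.1 * (cj p'.1 * ind (p'.2 = p.2)) =
     \sum_(p' <- R) p.1 * (cj p'.1 * ind (p'.2 = p.2)).
  move=> /decideP Pp; rewrite BR (bigID P) /= big1 ?add0r //.
  by move=> p' /decideP Hp'; rewrite indF ?mulr0 // => E; apply: Pp; rewrite -E.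
exists (G :: ksR); split.
  by rewrite (bigID P) /= (eq_bigr _ D1) -mulr_suml (eq_bigr _ D2) -BR big_cons ER.
move=> Hz q.
have G0 : G = 0 by apply: Hz; rewrite in_cons eqxx.
have HR0 : \sum_(p <- R) p.1 * ind (p.2 = q) = 0.
  by apply: HR => k Hk; apply: Hz; rewrite in_cons Hk orbT.
rewrite (bigID P) /= -BR HR0 addr0.
rewrite (eq_bigr (fun p => p.1 * ind (p0.2 = q))); first by rewrite -mulr_suml -/G G0 mul0r.
by move=> p /decideP ->.
Qed.

Section LeavittPathAlgebra.
Variables (K : fieldType) (V Ed : Type) (s r : Ed -> V).
Notation T := (fterm K (gen V Ed)).
Notation v_ v := (@TGen K (gen V Ed) (GV Ed v)).
Notation e_ e := (@TGen K (gen V Ed) (GE V e)).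
Notation es_ e := (@TGen K (gen V Ed) (GS V e)).
Local Notation "a === b" := (lpa_eq s r a b) (at level 70).

(** * Computing in the quotient *)

Add Parametric Relation : T (lpa_eq s r)
  reflexivity proved by (@Q_refl K V Ed s r)
  symmetry proved by (@Q_sym K V Ed s r)
  transitivity proved by (@Q_trans K V Ed s r) as lpa_rel.

Add Parametric Morphism : (@TAdd K (gen V Ed)) with signature
  lpa_eq s r ==> lpa_eq s r ==> lpa_eq s r as tadd_mor.
Proof. by move=> *; apply: Q_add. Qed.
Add Parametric Morphism : (@TMul K (gen V Ed)) with signature
  lpa_eq s r ==> lpa_eq s r ==> lpa_eq s r as tmul_mor.
Proof. by move=> *; apply: Q_mul. Qed.
Add Parametric Morphism k : (@TScale K (gen V Ed) k) with signature
  lpa_eq s r ==> lpa_eq s r as tscale_mor.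
Proof. by move=> *; apply: Q_scale. Qed.

Local Hint Extern 0 (lpa_eq _ _ _ _) => apply: Q_refl : core.

Lemma tscale0 (a : T) : TScale 0 a === TZero.
Proof. by rewrite -(subrr (1 : K)) Q_scaleDl Q_scale1 Q_addN. Qed.

Lemma taddr0 (a : T) : TAdd a TZero === a.
Proof. by rewrite Q_addC Q_add0. Qed.

Lemma tmul0l (a : T) : TMul TZero a === TZero.
Proof. by rewrite -{1}(tscale0 TZero) Q_scalel tscale0. Qed.

Lemma tmul0r (a : T) : TMul a TZero === TZero.
Proof. by rewrite -{1}(tscale0 TZero) Q_scaler tscale0. Qed.

Lemma tscaler0 k : TScale k (@TZero K (gen V Ed)) === TZero.
Proof. by rewrite -{1}(tscale0 TZero) -Q_scaleA mulr0 tscale0. Qed.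

Lemma tsum_cat (l1 l2 : seq T) : tsum (l1 ++ l2) === TAdd (tsum l1) (tsum l2).
Proof. by elim: l1 => [|a l IH] /=; rewrite ?Q_add0 // IH Q_addA. Qed.

Lemma tsum_mull (l : seq T) b : TMul (tsum l) b === tsum (map (fun t => TMul t b) l).
Proof. by elim: l => [|a l IH] /=; rewrite ?tmul0l // Q_mulDl IH. Qed.

Lemma tsum_mulr (l : seq T) b : TMul b (tsum l) === tsum (map (fun t => TMul b t) l).
Proof. by elim: l => [|a l IH] /=; rewrite ?tmul0r // Q_mulDr IH. Qed.

Lemma tsum_scale (l : seq T) k : TScale k (tsum l) === tsum (map (TScale k) l).
Proof. by elim: l => [|a l IH] /=; rewrite ?tscaler0 // Q_scaleDr IH. Qed.

Lemma eq_tsum_map (A : Type) (f g : A -> T) (l : seq A) :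
  (forall x, List.In x l -> f x === g x) -> tsum (map f l) === tsum (map g l).
Proof.
elim: l => [|a l IH] H //=.
by rewrite (H a (or_introl erefl)) IH // => x Hx; apply: H; right.
Qed.

Lemma vertex_idem v : TMul (v_ v) (v_ v) === v_ v.
Proof. exact/Q_rel/LR_vv. Qed.
Lemma vertex_orth v w : v <> w -> TMul (v_ v) (v_ w) === TZero.
Proof. by move=> H; apply/Q_rel/LR_vw. Qed.
Lemma source_edge e : TMul (v_ (s e)) (e_ e) === e_ e.
Proof. exact/Q_rel/LR_se. Qed.
Lemma edge_range e : TMul (e_ e) (v_ (r e)) === e_ e.
Proof. exact/Q_rel/LR_er. Qed.
Lemma range_ghost e : TMul (v_ (r e)) (es_ e) === es_ e.
Proof. exact/Q_rel/LR_re. Qed.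
Lemma ghost_source e : TMul (es_ e) (v_ (s e)) === es_ e.
Proof. exact/Q_rel/LR_es. Qed.
Lemma ghost_edge e : TMul (es_ e) (e_ e) === v_ (r e).
Proof. exact/Q_rel/LR_CK1. Qed.
Lemma ghost_edge_orth e f : e <> f -> TMul (es_ e) (e_ f) === TZero.
Proof. by move=> H; apply/Q_rel/LR_CK1'. Qed.

Lemma vertex_edge0 u e : u <> s e -> TMul (v_ u) (e_ e) === TZero.
Proof. by move=> H; rewrite -(source_edge e) Q_mulA (vertex_orth H) tmul0l. Qed.
Lemma edge_vertex0 e w : r e <> w -> TMul (e_ e) (v_ w) === TZero.
Proof. by move=> H; rewrite -(edge_range e) -Q_mulA (vertex_orth H) tmul0r. Qed.
Lemma edge_edge0 f e : r f <> s e -> TMul (e_ f) (e_ e) === TZero.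
Proof. by move=> H; rewrite -(edge_range f) -Q_mulA (vertex_edge0 H) tmul0r. Qed.
Lemma ghost_vertex0 f w : s f <> w -> TMul (es_ f) (v_ w) === TZero.
Proof. by move=> H; rewrite -(ghost_source f) -Q_mulA (vertex_orth H) tmul0r. Qed.

Section Involution.
Variable cj : {rmorphism K -> K}.

Lemma tstar_tsum (l : seq T) : tstar cj (tsum l) = tsum (map (tstar cj) l).
Proof. by elim: l => //= a l ->. Qed.

Lemma tstarK : (forall k, cj (cj k) = k) -> forall t : T, tstar cj (tstar cj t) = t.
Proof.
by move=> cjK; elim => [[v|e|e]||a IHa b IHb|k a IHa|a IHa b IHb] //=; rewrite ?IHa ?IHb ?cjK.
Qed.

Lemma tstar_leavitt_rel a b : leavitt_rel s r a b -> tstar cj a === tstar cj b.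
Proof.
case=> [v|v w Hvw|e|e|e|e|e|e f Hef|v l Hl Hnd Hiff] /=; apply: Q_rel; try by constructor.
- by apply: LR_vw => E; apply: Hvw.
- by apply: LR_CK1' => E; apply: Hef.
- rewrite tstar_tsum List_mapE -map_comp -List_mapE; exact: LR_CK2 Hl Hnd Hiff.
Qed.

Lemma tstar_lpa_eq a b : a === b -> tstar cj a === tstar cj b.
Proof.
elim=> {a b} /=.
- exact: tstar_leavitt_rel.
- by [].
- by move=> *; apply: Q_sym.
- by move=> a b c _ H1 _ H2; apply: Q_trans H1 H2.
- by move=> a a' b b' _ H1 _ H2; apply: Q_add.
- by move=> k a a' _ H; apply: Q_scale.
- by move=> a a' b b' _ H1 _ H2; apply: Q_mul.
- by move=> *; apply: Q_addA.
- by move=> *; apply: Q_addC.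
- by move=> *; apply: Q_add0.
- by move=> a; rewrite rmorphN1; apply: Q_addN.
- by move=> *; apply: Q_scaleDr.
- by move=> k l a; rewrite rmorphD; apply: Q_scaleDl.
- by move=> k l a; rewrite rmorphM; apply: Q_scaleA.
- by move=> a; rewrite rmorph1; apply: Q_scale1.
- by move=> *; apply/Q_sym/Q_mulA.
- by move=> *; apply: Q_mulDr.
- by move=> *; apply: Q_mulDl.
- by move=> *; apply: Q_scaler.
- by move=> *; apply: Q_scalel.
Qed.

End Involution.

(** * The action on functions of rays *)

(* A ray walks along E and may stop only at a sink.  [rdepth] counts the edges
   prepended by [rpush]; it makes prepending injective even on periodic rays. *)
Definition is_ray (u : nat -> V) (p : nat -> option Ed) := forall n,
  match p n with
  | Some e => s e = u n /\ r e = u n.+1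
  | None => forall e, s e <> u n
  end.

Record ray := Ray { rvert : nat -> V; redge : nat -> option Ed; rdepth : int;
                    rayP : is_ray rvert redge }.

Lemma ray_ext (x y : ray) :
  rvert x =1 rvert y -> redge x =1 redge y -> rdepth x = rdepth y -> x = y.
Proof.
case: x => u p z P; case: y => u' p' z' P' /= /functional_extensionality Eu
  /functional_extensionality Ep Ez.
by subst; rewrite (proof_irrelevance _ P P').
Qed.

Lemma ray_edge0 x e : redge x 0 = Some e -> s e = rvert x 0 /\ r e = rvert x 1.
Proof. by move=> H; have := rayP x 0; rewrite H. Qed.

Definition rtail (x : ray) : ray :=
  @Ray (fun n => rvert x n.+1) (fun n => redge x n.+1) (rdepth x - 1) (fun n => rayP x n.+1).

Definition fcons (A : Type) (a : A) (f : nat -> A) (n : nat) : A :=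
  if n is n'.+1 then f n' else a.

Lemma fcons_ray e x : rvert x 0 = r e ->
  is_ray (fcons (s e) (rvert x)) (fcons (Some e) (redge x)).
Proof. by move=> H [|n] /=; [split | exact: (rayP x n)]. Qed.

(* Prepending [e] is the identity on rays not starting at [r e]. *)
Definition rpush (e : Ed) (x : ray) : ray :=
  match excluded_middle_informative (rvert x 0 = r e) with
  | left H => @Ray (fcons (s e) (rvert x)) (fcons (Some e) (redge x)) (rdepth x + 1) (fcons_ray H)
  | right _ => x
  end.

Section Push.
Variables (e : Ed) (x : ray).
Hypothesis xe : rvert x 0 = r e.

Lemma rpush_vert : rvert (rpush e x) = fcons (s e) (rvert x).
Proof. by rewrite /rpush; case: excluded_middle_informative. Qed.
Lemma rpush_edge : redge (rpush e x) = fcons (Some e) (redge x).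
Proof. by rewrite /rpush; case: excluded_middle_informative. Qed.
Lemma rpush_depth : rdepth (rpush e x) = rdepth x + 1.
Proof. by rewrite /rpush; case: excluded_middle_informative. Qed.

Lemma rtail_push : rtail (rpush e x) = x.
Proof. by apply: ray_ext => [n|n|] /=; rewrite ?rpush_vert ?rpush_edge ?rpush_depth ?addrK. Qed.

End Push.

Lemma rpush_tail e x : redge x 0 = Some e -> rpush e (rtail x) = x.
Proof.
move=> H; have [H1 H2] := ray_edge0 H; have H3 : rvert (rtail x) 0 = r e by [].
by apply: ray_ext => [[|n]|[|n]|] /=; rewrite ?rpush_vert ?rpush_edge ?rpush_depth //= subrK.
Qed.

Definition op := (ray -> K) -> ray -> K.

Definition act_gen (g : gen V Ed) : op :=
  match g with
  | GV v => fun phi x => ind (rvert x 0 = v) * phi x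
  | GE e => fun phi x => ind (redge x 0 = Some e) * phi (rtail x)
  | GS e => fun phi x => ind (rvert x 0 = r e) * phi (rpush e x)
  end.

Fixpoint act (t : T) : op :=
  match t with
  | TGen g => act_gen g
  | TZero => fun _ _ => 0
  | TAdd a b => fun phi x => act a phi x + act b phi x
  | TScale k a => fun phi x => k * act a phi x
  | TMul a b => fun phi => act a (act b phi)
  end.

Ltac funext := apply: functional_extensionality => ?.
Ltac simp0 := rewrite ?mul0r ?mulr0 ?add0r ?addr0.
Ltac case_ind P :=
  let H := fresh "H" in
  destruct (classic P) as [H|H]; [rewrite (@indT _ P H) | rewrite (@indF _ P H)].

Lemma act_linear (t : T) :
  (forall phi psi, act t (fun y => phi y + psi y) = fun x => act t phi x + act t psi x) /\
  (forall k phi, act t (fun y => k * phi y) = fun x => k * act t phi x).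
Proof.
elim: t => [g||a [Ha1 Ha2] b [Hb1 Hb2]|k a [Ha1 Ha2]|a [Ha1 Ha2] b [Hb1 Hb2]] /=.
- by case: g => [v|e|e] /=; split => *; funext; ring.
- by split => *; funext; ring.
- by split => *; rewrite ?Ha1 ?Hb1 ?Ha2 ?Hb2; funext; ring.
- by split => *; rewrite ?Ha1 ?Ha2; funext; ring.
- by split => *; rewrite ?Hb1 ?Ha1 ?Hb2 ?Ha2.
Qed.

Lemma act_tsum (l : seq T) phi x : act (tsum l) phi x = \sum_(t <- l) act t phi x.
Proof. by elim: l => [|a l IH] /=; rewrite ?big_nil ?big_cons ?IH. Qed.

Lemma act_CK2 v (l : seq Ed) (phi : ray -> K) x :
  l <> [::] -> List.NoDup l -> (forall e, s e = v <-> List.In e l) ->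
  ind (rvert x 0 = v) * phi x =
  \sum_(e <- l) ind (redge x 0 = Some e) * (ind (rvert (rtail x) 0 = r e) * phi (rpush e (rtail x))).
Proof.
move=> Hl Hnd Hiff; case E: (redge x 0) => [f|].
- have [H1 H2] := ray_edge0 E.
  have -> : \sum_(e <- l) ind (Some f = Some e) * (ind (rvert x 1 = r e) * phi (rpush e (rtail x)))
         = \sum_(e <- l) ind (e = f) * phi x.
    apply: eq_bigr => e _; case_ind (e = f).
    + by subst; rewrite indT // indT //= mul1r rpush_tail.
    + by rewrite indF ?mul0r // => [[?]]; subst.
  case_ind (rvert x 0 = v).
  + by rewrite mul1r sum_ind_eq_In //; apply/Hiff; rewrite H1.
  + by rewrite mul0r sum_ind_eq_notIn // => /Hiff Hs; apply: H; rewrite -H1.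
- rewrite big1 => [|e _]; last by rewrite indF ?mul0r.
  rewrite indF ?mul0r // => Hv; case: l Hl Hnd Hiff => [//|e l] _ _ Hiff.
  by have := rayP x 0; rewrite E => /(_ e); apply; rewrite Hv; apply/Hiff; left.
Qed.

Lemma act_leavitt_rel a b : leavitt_rel s r a b -> act a = act b.
Proof.
case=> [v|v w Hvw|e|e|e|e|e|e f Hef|v l Hl Hnd Hiff] /=;
  apply: functional_extensionality => phi; apply: functional_extensionality => x.
- by rewrite mulrA mul_ind_idem.
- by case_ind (rvert x 0 = v); simp0 => //; subst; rewrite indF // mul0r mulr0.
- case_ind (redge x 0 = Some e); simp0 => //.
  by have [H1 _] := ray_edge0 H; rewrite indT // mul1r.
- case_ind (redge x 0 = Some e); simp0 => //.
  by have [_ H1] := ray_edge0 H; rewrite indT // mul1r.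
- by rewrite mulrA mul_ind_idem.
- case_ind (rvert x 0 = r e); simp0 => //.
  by rewrite indT ?mul1r // rpush_vert.
- case_ind (rvert x 0 = r e); simp0 => //.
  by rewrite rpush_edge // indT //= mul1r rtail_push.
- case_ind (rvert x 0 = r e); simp0 => //.
  by rewrite rpush_edge // indF ?mul0r ?mulr0 //= => [[E]]; apply: Hef.
- by rewrite List_mapE act_tsum big_map /=; apply: act_CK2.
Qed.

Lemma act_lpa_eq a b : a === b -> act a = act b.
Proof.
elim=> {a b} /=.
- exact: act_leavitt_rel.
- by [].
- by [].
- by move=> a b c _ -> _ ->.
- by move=> a a' b b' _ -> _ ->.
- by move=> k a a' _ ->.
- by move=> a a' b b' _ -> _ ->.
- by move=> a b c; funext; funext; ring.
- by move=> a b; funext; funext; ring.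
- by move=> a; funext; funext; ring.
- by move=> a; funext; funext; ring.
- by move=> k a b; funext; funext; ring.
- by move=> k l a; funext; funext; ring.
- by move=> k l a; funext; funext; ring.
- by move=> a; funext; funext; ring.
- by [].
- by move=> a b c; funext; funext.
- by move=> a b c; funext; rewrite (proj1 (act_linear a)).
- by move=> k a b; funext; funext.
- by move=> k a b; funext; rewrite (proj2 (act_linear a)).
Qed.

Definition out_edge (v : V) : option Ed :=
  match excluded_middle_informative (exists e, s e = v) with
  | left H => Some (proj1_sig (constructive_indefinite_description _ H))
  | right _ => None
  end.

Lemma out_edgeP v :
  match out_edge v with Some e => s e = v | None => forall e, s e <> v end.
Proof.
rewrite /out_edge; case: excluded_middle_informative => [H|H].
- exact: (proj2_sig (constructive_indefinite_description _ H)).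
- by move=> e He; apply: H; exists e.
Qed.

Fixpoint greedy_vert (w : V) (n : nat) : V :=
  if n is n'.+1 then
    (if out_edge (greedy_vert w n') is Some e then r e else greedy_vert w n')
  else w.

Lemma greedy_ray_subproof w : is_ray (greedy_vert w) (out_edge \o greedy_vert w).
Proof. by move=> n /=; have := out_edgeP (greedy_vert w n); case: out_edge. Qed.

Definition greedy_ray (w : V) : ray :=
  @Ray (greedy_vert w) (out_edge \o greedy_vert w) 0 (greedy_ray_subproof w).

Lemma field_pos_def_of_lpa (cj : {rmorphism K -> K}) (v0 : V) :
  lpa_pos_def s r cj -> field_pos_def cj.
Proof.
move=> Hpos ks Hks k Hk.
pose xs := List.map (fun k => TScale k (v_ v0)) ks.
have Hsum : tsum (List.map (fun x => TMul x (tstar cj x)) xs)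
            === TScale (\sum_(k <- ks) k * cj k) (v_ v0).
  rewrite /xs; elim: (ks) => [|a l IH] /=; first by rewrite big_nil tscale0.
  by rewrite big_cons IH Q_scaleDl Q_scalel Q_scaler -Q_scaleA vertex_idem.
have : TScale k (v_ v0) === TZero.
  apply: (Hpos xs); first by rewrite Hsum Hks tscale0.
  exact/List.in_map/mem_In.
move=> /act_lpa_eq /(congr1 (fun f => f (fun _ => 1) (greedy_ray v0))) /=.
by rewrite indT // !mulr1.
Qed.

(** * Monomials and the normal form *)

Fixpoint path_term (w : V) (a : seq Ed) : T :=
  if a is e :: a' then TMul (e_ e) (path_term w a') else v_ w.

Fixpoint ghost_term (w : V) (b : seq Ed) : T :=
  if b is e :: b' then TMul (ghost_term w b') (es_ e) else v_ w.

Definition monomial w a b := TMul (path_term w a) (ghost_term w b).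

Definition path_source (a : seq Ed) (w : V) := if a is e :: _ then s e else w.

Fixpoint is_path_to (a : seq Ed) (w : V) : Prop :=
  if a is e :: a' then r e = path_source a' w /\ is_path_to a' w else True.

(* [MTerm c w a b] stands for c * a b^*, a and b being paths ending at w. *)
Record mterm := MTerm { mcoef : K; mvert : V; mpath : seq Ed; mghost : seq Ed }.

Definition term_of (x : mterm) : T := TScale (mcoef x) (monomial (mvert x) (mpath x) (mghost x)).
Definition mterm_ok (x : mterm) := is_path_to (mpath x) (mvert x) /\ is_path_to (mghost x) (mvert x).
Definition mscale (k : K) (x : mterm) := MTerm (k * mcoef x) (mvert x) (mpath x) (mghost x).
Definition msum (L : seq mterm) := tsum (map term_of L).

Definition combination (P : mterm -> Prop) (t : T) := exists2 L, all_In P L & t === msum L.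

Lemma msum_cat L1 L2 : msum (L1 ++ L2) === TAdd (msum L1) (msum L2).
Proof. by rewrite /msum map_cat tsum_cat. Qed.

Lemma msum_scale k L : TScale k (msum L) === msum (map (mscale k) L).
Proof. by elim: L => [|x L IH] /=; rewrite ?tscaler0 // Q_scaleDr -Q_scaleA IH. Qed.

Lemma combination0 P : combination P TZero.
Proof. by exists [::]. Qed.

Lemma combination1 (P : mterm -> Prop) x : P x -> combination P (term_of x).
Proof. by move=> Px; exists [:: x] => [y [<-|]//|]; rewrite /msum /= taddr0. Qed.

Lemma combination_add P t1 t2 :
  combination P t1 -> combination P t2 -> combination P (TAdd t1 t2).
Proof.
by move=> [L1 H1 E1] [L2 H2 E2]; exists (L1 ++ L2); [exact: all_In_cat|rewrite E1 E2 msum_cat].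
Qed.

Lemma combination_tsum_map P (A : Type) (f : A -> T) (l : seq A) :
  (forall x, List.In x l -> combination P (f x)) -> combination P (tsum (map f l)).
Proof.
elim: l => [|a l IH] H /=; first exact: combination0.
by apply: combination_add; [apply: H; left|apply: IH => x Hx; apply: H; right].
Qed.

Lemma combination_scale k t : combination mterm_ok t -> combination mterm_ok (TScale k t).
Proof. by move=> [L HL E]; exists (map (mscale k) L); [exact: all_In_map|rewrite E msum_scale]. Qed.

Lemma combination_eq P t t' : t === t' -> combination P t' -> combination P t.
Proof. by move=> E [L HL E']; exists L; rewrite // E. Qed.

Add Parametric Morphism P : (combination P) with signature
  lpa_eq s r ==> iff as combination_mor.
Proof. by move=> t t' E; split; apply: combination_eq; rewrite E. Qed.

Lemma monomial_combination w a b : is_path_to a w -> is_path_to b w ->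
  combination mterm_ok (monomial w a b).
Proof. by move=> Ha Hb; rewrite -(Q_scale1 s r (monomial w a b)); apply: (combination1 (x := MTerm 1 w a b)). Qed.

Lemma path_term_vertexl a w : TMul (v_ (path_source a w)) (path_term w a) === path_term w a.
Proof. by case: a => [|e a] /=; [exact: vertex_idem|rewrite Q_mulA source_edge]. Qed.

Lemma path_term_vertexr a w : TMul (path_term w a) (v_ w) === path_term w a.
Proof. by elim: a => [|e a IH] /=; [exact: vertex_idem|rewrite -Q_mulA IH]. Qed.

Lemma ghost_term_vertexl b w : TMul (v_ w) (ghost_term w b) === ghost_term w b.
Proof. by elim: b => [|e b IH] /=; [exact: vertex_idem|rewrite Q_mulA IH]. Qed.

Lemma ghost_term_rcons b w e : s e = w ->
  ghost_term (r e) (rcons b e) === TMul (es_ e) (ghost_term w b).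
Proof.
move=> H; elim: b => [|e' b IH] /=; first by rewrite range_ghost -H ghost_source.
by rewrite IH -Q_mulA.
Qed.

Lemma path_term_rcons a w e : s e = w ->
  path_term (r e) (rcons a e) === TMul (path_term w a) (e_ e).
Proof.
move=> H; elim: a => [|e' a IH] /=; first by rewrite edge_range -H source_edge.
by rewrite IH Q_mulA.
Qed.

Lemma is_path_to_rcons a w e : is_path_to a w -> s e = w -> is_path_to (rcons a e) (r e).
Proof.
move=> + H; elim: a => [|e' a IH] //= [H1 H2].
by split; [case: (a) H1 => /=; rewrite ?H|exact: IH].
Qed.

Lemma gen_mul_monomial g w a b : is_path_to a w -> is_path_to b w ->
  combination mterm_ok (TMul (TGen K g) (monomial w a b)).
Proof.
move=> Ha Hb; rewrite /monomial.
have Z t : t === TZero -> combination mterm_ok t by move->; apply: combination0.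
case: g => [u|f|f]; case: a Ha => [|e a] /= Ha.
- case: (classic (u = w)) => [->|H]; last by apply: Z; rewrite Q_mulA (vertex_orth H) tmul0l.
  by rewrite Q_mulA vertex_idem; apply: (monomial_combination (a := [::])).
- case: (classic (u = s e)) => [->|H]; last by apply: Z; rewrite !Q_mulA (vertex_edge0 H) !tmul0l.
  by rewrite !Q_mulA source_edge; apply: (monomial_combination (a := e :: a)).
- case: (classic (r f = w)) => H; last by apply: Z; rewrite Q_mulA (edge_vertex0 H) tmul0l.
  by rewrite Q_mulA; apply: (monomial_combination (a := [:: f])).
- case: (classic (r f = s e)) => H; last by apply: Z; rewrite !Q_mulA (edge_edge0 H) !tmul0l.
  by rewrite Q_mulA; apply: (monomial_combination (a := [:: f, e & a])).
- case: (classic (s f = w)) => H; last by apply: Z; rewrite Q_mulA (ghost_vertex0 H) tmul0l.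
  rewrite ghost_term_vertexl -(ghost_term_rcons _ H) -ghost_term_vertexl.
  by apply: (monomial_combination (a := [::])) => //; exact: is_path_to_rcons Hb H.
- case: (classic (f = e)) => [->|H]; last by apply: Z; rewrite !Q_mulA (ghost_edge_orth H) !tmul0l.
  case: Ha => He Ha.
  by rewrite !Q_mulA ghost_edge He path_term_vertexl; apply: monomial_combination.
Qed.

Lemma combination_mul t t' : combination mterm_ok t' -> combination mterm_ok (TMul t t').
Proof.
elim: t t' => [g||a IHa b IHb|k a IHa|a IHa b IHb] t' Ht'.
- case: Ht' => L HL ->; rewrite /msum tsum_mulr -map_comp.
  apply: combination_tsum_map => x /HL [Hxa Hxb] /=.
  by rewrite Q_scaler; apply/combination_scale/gen_mul_monomial.
- by rewrite tmul0l; apply: combination0.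
- by rewrite Q_mulDl; apply: combination_add; [exact: IHa|exact: IHb].
- by rewrite Q_scalel; apply/combination_scale/IHa.
- by rewrite -Q_mulA; apply/IHa/IHb.
Qed.

Lemma lpa_combination (t : T) : combination mterm_ok t.
Proof.
elim: t => [[v|e|e]||a IHa b IHb|k a IHa|a IHa b IHb].
- by rewrite -vertex_idem; apply: (monomial_combination (a := [::]) (b := [::])).
- by rewrite -edge_range -{1}edge_range; apply: (monomial_combination (a := [:: e]) (b := [::])).
- by rewrite -range_ghost -{1}range_ghost; apply: (monomial_combination (a := [::]) (b := [:: e])).
- exact: combination0.
- exact: combination_add.
- exact: combination_scale.
- exact: combination_mul.
Qed.

Definition regular (w : V) :=
  exists l : seq Ed, [/\ l <> [::], List.NoDup l & forall e, s e = w <-> List.In e l].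

Definition reduced (N : nat) (x : mterm) :=
  [/\ mterm_ok x, (size (mpath x) <= N)%N & (size (mpath x) < N)%N -> ~ regular (mvert x)].

Lemma monomial_CK2 w a b (l : seq Ed) :
  l <> [::] -> List.NoDup l -> (forall e, s e = w <-> List.In e l) ->
  monomial w a b === tsum (map (fun e => monomial (r e) (rcons a e) (rcons b e)) l).
Proof.
move=> Hl Hnd Hiff.
rewrite /monomial -{1}(path_term_vertexr a w) (Q_rel (LR_CK2 _ _ Hl Hnd Hiff)) List_mapE.
rewrite tsum_mulr tsum_mull -!map_comp; apply: eq_tsum_map => e He /=.
have Hs : s e = w by apply/Hiff.
by rewrite (path_term_rcons _ Hs) (ghost_term_rcons _ Hs) !Q_mulA.
Qed.

Lemma reduce_mterm N x : mterm_ok x -> (size (mpath x) <= N)%N ->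
  combination (reduced N) (term_of x).
Proof.
move Hd : (N - size (mpath x))%N => d; elim: d x Hd => [|d IH] x Hd Hx HN.
  by apply: combination1; split => // Hlt; lia.
case: (classic (regular (mvert x))) => [[l [Hl Hnd Hiff]]|Hreg]; last exact: combination1.
case: x Hx HN Hd Hiff => c w a b [Ha Hb] /= HN Hd Hiff.
rewrite /term_of /= (monomial_CK2 a b Hl Hnd Hiff) tsum_scale -map_comp.
apply: combination_tsum_map => e He /=.
have Hs : s e = w by apply/Hiff.
apply: (IH (MTerm c (r e) (rcons a e) (rcons b e))) => /=; rewrite ?size_rcons; try lia.
by split; [exact: is_path_to_rcons Ha Hs|exact: is_path_to_rcons Hb Hs].
Qed.

(** * Faithfulness of the action *)

Fixpoint rdrop (n : nat) (x : ray) : ray := if n is n'.+1 then rdrop n' (rtail x) else x.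

Fixpoint starts_with (a : seq Ed) (w : V) (x : ray) : Prop :=
  if a is e :: a' then redge x 0 = Some e /\ starts_with a' w (rtail x) else rvert x 0 = w.

Fixpoint rcat (b : seq Ed) (x : ray) : ray := if b is e :: b' then rpush e (rcat b' x) else x.

Lemma act_path_term w a phi x :
  act (path_term w a) phi x = ind (starts_with a w x) * phi (rdrop (size a) x).
Proof. by elim: a x => [|e a IH] x //=; rewrite IH ind_and mulrA. Qed.

Lemma rcat_vert0 b w x : is_path_to b w -> rvert x 0 = w -> rvert (rcat b x) 0 = path_source b w.
Proof.
elim: b => [|e b IH] //= [H1 H2] Hx.
by rewrite rpush_vert // IH.
Qed.

Lemma act_ghost_term w b phi x : is_path_to b w ->
  act (ghost_term w b) phi x = ind (rvert x 0 = w) * phi (rcat b x).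
Proof.
elim: b phi => [|e b IH] phi //= [H1 H2].
rewrite IH //; case_ind (rvert x 0 = w); simp0 => //.
by rewrite (@indT _ (rvert (rcat b x) 0 = r e)) ?mul1r // (rcat_vert0 H2 H).
Qed.

Lemma starts_with_end a w x : starts_with a w x -> rvert (rdrop (size a) x) 0 = w.
Proof. by elim: a x => [|e a IH] x //= [_ /IH]. Qed.

Lemma act_monomial w a b phi x : is_path_to b w ->
  act (monomial w a b) phi x = ind (starts_with a w x) * phi (rcat b (rdrop (size a) x)).
Proof.
move=> Hb; rewrite /= act_path_term act_ghost_term //.
case_ind (starts_with a w x); simp0 => //.
by rewrite indT ?mul1r // (starts_with_end H).
Qed.

Lemma starts_with_rcat a w y : is_path_to a w -> rvert y 0 = w ->
  starts_with a w (rcat a y) /\ rdrop (size a) (rcat a y) = y.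
Proof.
elim: a => [|e a IH] //= [H1 H2] Hy.
have H3 : rvert (rcat a y) 0 = r e by rewrite (rcat_vert0 H2 Hy).
by rewrite rpush_edge // rtail_push //; have [] := IH H2 Hy.
Qed.

Lemma rcat_rdrop a w x : is_path_to a w -> starts_with a w x -> x = rcat a (rdrop (size a) x).
Proof.
elim: a x => [|e a IH] x //= [H1 H2] [H3 H4].
by rewrite -(IH _ H2 H4) rpush_tail.
Qed.

(* [x |-> rcat a (rdrop (size b) x)] and [x |-> rcat b (rdrop (size a) x)],
   the actions of b a^* and a b^* on points, are mutually inverse. *)
Lemma rcat_rdrop_swap a b w x y : is_path_to a w -> is_path_to b w ->
  starts_with b w x -> rcat a (rdrop (size b) x) = y ->
  starts_with a w y /\ rcat b (rdrop (size a) y) = x.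
Proof.
move=> Ha Hb Hx <-.
have [P1 ->] := starts_with_rcat Ha (starts_with_end Hx).
by split => //; rewrite -(rcat_rdrop Hb Hx).
Qed.

Lemma rdepth_rcat b w y : is_path_to b w -> rvert y 0 = w ->
  rdepth (rcat b y) = rdepth y + (size b)%:Z.
Proof.
elim: b => [|e b IH] /= => [_ _|[H1 H2] Hy]; first by rewrite addr0.
have H3 : rvert (rcat b y) 0 = r e by rewrite (rcat_vert0 H2 Hy).
by rewrite rpush_depth // IH // -addrA -add1n PoszD [_ + 1]addrC.
Qed.

Lemma rcat_inj b b' w y : is_path_to b w -> is_path_to b' w -> rvert y 0 = w ->
  rcat b y = rcat b' y -> b = b'.
Proof.
move=> Hb Hb' Hy E.
have : size b = size b'.
  by have := congr1 rdepth E; rewrite (rdepth_rcat Hb Hy) (rdepth_rcat Hb' Hy) => /addrI [].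
elim: b b' Hb Hb' E => [|e b IH] [|e' b'] //= [H1 H2] [H1' H2'] E [Hs].
have H3 : rvert (rcat b y) 0 = r e by rewrite (rcat_vert0 H2 Hy).
have H3' : rvert (rcat b' y) 0 = r e' by rewrite (rcat_vert0 H2' Hy).
have Ee : e = e' by have := congr1 (fun x => redge x 0) E; rewrite /= !rpush_edge //= => [[]].
subst e'; congr (_ :: _); apply: IH => //.
by have := congr1 rtail E; rewrite !rtail_push.
Qed.

Lemma starts_with_rcat_split a w y : is_path_to a w -> rvert y 0 = w ->
  forall a' w', starts_with a' w' (rcat a y) -> (size a <= size a')%N ->
  exists2 g, a' = a ++ g & starts_with g w' y.
Proof.
elim: a => [|e a IH] /= => [_ Hy a' w' H _|[H1 H2] Hy [|e' a'] w'] //; first by exists a'.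
have H3 : rvert (rcat a y) 0 = r e by rewrite (rcat_vert0 H2 Hy).
rewrite /= rpush_edge // rtail_push //= => [[[<-] Hp]] Hs.
by have [g -> Hg] := IH H2 Hy a' w' Hp Hs; exists g.
Qed.

Definition delta (xi : ray) : ray -> K := fun x => ind (x = xi).

Definition mkey (x : mterm) := (mvert x, mpath x, mghost x).

Lemma act_term_of x phi y : mterm_ok x -> act (term_of x) phi y =
  mcoef x * (ind (starts_with (mpath x) (mvert x) y) * phi (rcat (mghost x) (rdrop (size (mpath x)) y))).
Proof. by case: x => c w a b [_ Hb] /=; rewrite -(act_monomial _ _ _ Hb). Qed.

Lemma act_msum L phi y : all_In mterm_ok L -> act (msum L) phi y =
  \sum_(x <- L) mcoef x * (ind (starts_with (mpath x) (mvert x) y) *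
                           phi (rcat (mghost x) (rdrop (size (mpath x)) y))).
Proof.
by move=> HL; rewrite /msum act_tsum big_map; apply: eq_big_In => x /HL; apply: act_term_of.
Qed.

Lemma msum_split (P : pred mterm) L :
  msum L === TAdd (msum (filter P L)) (msum (filter (predC P) L)).
Proof.
elim: L => [|a L IH] /=; first by rewrite Q_add0.
rewrite /msum /=; case: (P a) => /=; rewrite -!/(msum _) IH Q_addA //.
by rewrite (Q_addC _ _ (term_of a)) -Q_addA.
Qed.

Lemma msum_same_key x0 L : all_In (fun y => mkey y = mkey x0) L ->
  msum L === TScale (\sum_(y <- L) mcoef y) (monomial (mvert x0) (mpath x0) (mghost x0)).
Proof.
elim: L => [|a L IH] H /=; first by rewrite big_nil tscale0.
rewrite big_cons /msum /= -/(msum L) IH; last by move=> y Hy; apply: H; right.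
by have := H a (or_introl erefl); rewrite /mkey /term_of => -[-> -> ->]; rewrite Q_scaleDl.
Qed.

Fixpoint edges_at (k : nat) (L : seq mterm) : seq Ed :=
  if L is y :: L' then
    (if List.nth_error (mpath y) k is Some e then e :: edges_at k L' else edges_at k L')
  else [::].

Lemma edges_atP k L y e :
  List.In y L -> List.nth_error (mpath y) k = Some e -> List.In e (edges_at k L).
Proof.
elim: L => [|a L IH] //= [->|Hy]; first by move=> ->; left.
by move=> H; case: (List.nth_error (mpath a) k) => [f|]; [right|]; exact: IH.
Qed.

Lemma not_regular_avoid w : ~ regular w -> (exists e, s e = w) ->
  forall E, exists e, s e = w /\ ~ List.In e E.
Proof.
move=> Hreg [e0 He0] E; apply: NNPP => Hn.
have HE e : s e = w -> List.In e E by move=> He; apply: NNPP => Hn'; apply: Hn; exists e.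
have [l Hnd Hl] := exists_NoDup_filter E (fun e => s e = w).
apply: Hreg; exists l; split => //.
- by move=> El; have := proj2 (Hl e0) (conj (HE e0 He0) He0); rewrite El.
- by move=> e; split => [He|/Hl[]//]; apply/Hl; split => //; exact: HE.
Qed.

Lemma exists_exit_ray w (E : seq Ed) (P : Prop) : (P -> ~ regular w) ->
  exists2 y, rvert y 0 = w & forall e, redge y 0 = Some e -> List.In e E -> ~ P.
Proof.
move=> Hreg; case: (classic (P /\ exists e, s e = w)) => [[HP Hex]|Hc].
- have [e [<- HnE]] := not_regular_avoid (Hreg HP) Hex E.
  have H1 : rvert (greedy_ray (r e)) 0 = r e by [].
  by exists (rpush e (greedy_ray (r e))); rewrite ?rpush_vert ?rpush_edge //= => e' [<-].
- exists (greedy_ray w) => // e' He' _ HP; apply: Hc; split => //.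
  by exists e'; have := out_edgeP w; rewrite /= in He'; rewrite He'.
Qed.

(* A longer [mpath y] starting the ray [rcat (mpath x0) y0] would continue
   along [redge y0 0], which the last hypothesis forbids for reduced [y]. *)
Lemma monomial_detected N L x0 y0 : all_In (reduced N) L -> List.In x0 L ->
  all_In (fun y => size (mpath x0) <= size (mpath y))%N L ->
  rvert y0 0 = mvert x0 ->
  (forall e, redge y0 0 = Some e -> List.In e (edges_at (size (mpath x0)) L) ->
     ~ (size (mpath x0) < N)%N) ->
  forall y, List.In y L ->
  (starts_with (mpath y) (mvert y) (rcat (mpath x0) y0) /\
   rcat (mghost y) (rdrop (size (mpath y)) (rcat (mpath x0) y0)) = rcat (mghost x0) y0)
  <-> mkey y = mkey x0.
Proof.
move=> HL Hx0 Hmin Hy0 Hexit y Hy.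
have [[Ha0 Hb0] HN0 _] := HL x0 Hx0.
have [[Ha Hb] HN _] := HL y Hy.
have [P1 P2] := starts_with_rcat Ha0 Hy0.
split; last by rewrite /mkey => -[-> -> ->]; rewrite P2.
move=> [Hst Hcat].
have [[|e g] Eg Hg] := starts_with_rcat_split Ha0 Hy0 Hst (Hmin y Hy).
- rewrite cats0 in Eg; rewrite /= in Hg.
  have Ew : mvert y = mvert x0 by rewrite -Hg Hy0.
  rewrite Eg P2 in Hcat; rewrite Ew in Hb.
  by rewrite /mkey Ew Eg (rcat_inj Hb Hb0 Hy0 Hcat).
- case: Hg => He _; exfalso; apply: (Hexit e He).
  + by apply: (edges_atP Hy); rewrite Eg nth_error_size_cat.
  + by apply: leq_trans HN; rewrite Eg size_cat /=; lia.
Qed.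

Lemma msum_faithful N L : all_In (reduced N) L ->
  (forall xi y, act (msum L) (delta xi) y = 0) -> msum L === TZero.
Proof.
have [n] := ubnP (size L); elim: n L => // n IH L /ltnSE Hs HL H.
case: (classic (L = [::])) => [->//|HnL].
have HLok : all_In mterm_ok L by move=> y /HL[].
have [x0 Hx0 Hmin] := exists_argmin_In (size \o mpath) HnL.
have [_ _ HR0] := HL x0 Hx0.
have [y0 Hy0 Hexit] := exists_exit_ray (edges_at (size (mpath x0)) L) HR0.
pose P : pred mterm := fun y => decide (mkey y = mkey x0).
have Hsum : \sum_(y <- L) mcoef y * ind (mkey y = mkey x0) = 0.
  apply: etrans (H (rcat (mghost x0) y0) (rcat (mpath x0) y0)); rewrite act_msum //.
  apply: eq_big_In => y Hy; congr (_ * _); rewrite -ind_and; apply: eq_ind.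
  exact: iff_sym (monomial_detected HL Hx0 Hmin Hy0 Hexit Hy).
have E1 : msum (filter P L) === TZero.
  rewrite (@msum_same_key x0); last by move=> y /(In_filter (l := L))[_ /decideP].
  suff -> : \sum_(y <- filter P L) mcoef y = 0 by exact: tscale0.
  apply: etrans _ Hsum; rewrite big_filter big_mkcond; apply: eq_bigr => y _.
  by rewrite /P /ind; case: decideP; rewrite ?mulr1 ?mulr0.
have E2 : msum L === msum (filter (predC P) L) by rewrite (msum_split P) E1 Q_add0.
rewrite E2; apply: IH.
- have := size_filterC_lt Hx0 (_ : P x0); rewrite /P; case: decideP => // _ /(_ isT); lia.
- by move=> y /(In_filter (l := L))[Hy _]; exact: HL.
- by move=> xi q; rewrite -(act_lpa_eq E2).
Qed.

Lemma act_faithful (t : T) : (forall xi y, act t (delta xi) y = 0) -> t === TZero.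
Proof.
have [L HL EL] := lpa_combination t.
pose N := \max_(x <- L) size (mpath x).
have [L' HL' EL'] : combination (reduced N) (msum L).
  apply: combination_tsum_map => x Hx; apply: reduce_mterm; first exact: HL.
  exact: (leq_bigmax_In (size \o mpath)).
have Et := Q_trans EL EL'.
by rewrite (act_lpa_eq Et) Et; apply: msum_faithful HL'.
Qed.

(** * Positivity *)

Section Positivity.
Variable cj : {rmorphism K -> K}.

Lemma tstar_path_term w a : tstar cj (path_term w a) = ghost_term w a.
Proof. by elim: a => //= e a ->. Qed.

Lemma tstar_ghost_term w b : tstar cj (ghost_term w b) = path_term w b.
Proof. by elim: b => //= e b ->. Qed.

Definition mstar (x : mterm) := MTerm (cj (mcoef x)) (mvert x) (mghost x) (mpath x).

Lemma tstar_msum L : tstar cj (msum L) = msum (map mstar L).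
Proof.
elim: L => [|x L IH] //=; rewrite /msum /= -/(msum L) IH.
by rewrite /term_of /= /monomial /= tstar_path_term tstar_ghost_term.
Qed.

(* The coefficients of [x^* delta_xi] are cj of those grouped in the point
   masses that [x] sends to [xi], so x x^* evaluated at xi is their norm. *)
Lemma act_mul_tstar_point_mass (x : T) xi : exists ks : seq K,
  act (TMul x (tstar cj x)) (delta xi) xi = \sum_(k <- ks) k * cj k /\
  ((forall k, k \in ks -> k = 0) -> forall y, act (tstar cj x) (delta xi) y = 0).
Proof.
have [L HL EL] := lpa_combination x.
have ES : tstar cj x === msum (map mstar L) by rewrite -tstar_msum; exact: tstar_lpa_eq EL.
have HLs : all_In mterm_ok (map mstar L) by apply: all_In_map => y /HL [].
pose c y := mcoef y * ind (starts_with (mpath y) (mvert y) xi).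
pose Q y := rcat (mghost y) (rdrop (size (mpath y)) xi).
have Hstar y : act (tstar cj x) (delta xi) y = cj (\sum_(z <- L) c z * ind (Q z = y)).
  rewrite (act_lpa_eq ES) act_msum // big_map rmorph_sum; apply: eq_big_In => z /HL [Ha Hb] /=.
  rewrite /c !rmorphM !rmorph_ind -mulrA; congr (_ * _); rewrite /delta -!ind_and; apply: eq_ind.
  by split=> [[H1 H2]|[H1 H2]]; [exact: rcat_rdrop_swap Ha Hb H1 H2|exact: rcat_rdrop_swap Hb Ha H1 H2].
have [ks [Eks Hks]] := double_sum_norms cj (map (fun y => (c y, Q y)) L).
exists ks; split.
- rewrite -Eks /= (act_lpa_eq EL) act_msum // big_map; apply: eq_big_In => y Hy /=.
  rewrite Hstar big_map rmorph_sum mulrA mulr_sumr; apply: eq_bigr => z _ /=.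
  by rewrite rmorphM rmorph_ind.
- by move=> Hz y; rewrite Hstar; have := Hks Hz y; rewrite big_map /= => ->; exact: rmorph0.
Qed.

Lemma act_sum_mul_tstar_point_mass (xs : seq T) xi : exists ks : seq K,
  \sum_(x <- xs) act (TMul x (tstar cj x)) (delta xi) xi = \sum_(k <- ks) k * cj k /\
  ((forall k, k \in ks -> k = 0) ->
     forall x, List.In x xs -> forall y, act (tstar cj x) (delta xi) y = 0).
Proof.
elim: xs => [|x xs [ks [E H]]]; first by exists [::]; split; rewrite ?big_nil.
have [kx [Ex Hx]] := act_mul_tstar_point_mass x xi.
exists (kx ++ ks); split; first by rewrite big_cons big_cat Ex E.
move=> Hz z [<-|Hz'].
- by apply: Hx => k Hk; apply: Hz; rewrite mem_cat Hk.
- by apply: H => // k Hk; apply: Hz; rewrite mem_cat Hk orbT.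
Qed.

Lemma lpa_pos_def_of_field : (forall k, cj (cj k) = k) -> field_pos_def cj -> lpa_pos_def s r cj.
Proof.
move=> cjK Hf xs Hxs x Hx.
suff Hx0 : tstar cj x === TZero by rewrite -(tstarK cjK x); exact: tstar_lpa_eq Hx0.
apply: act_faithful => xi y.
have [ks [E1 E2]] := act_sum_mul_tstar_point_mass xs xi.
apply: E2 => //; apply: Hf; rewrite -E1.
have := congr1 (fun f => f (delta xi) xi) (act_lpa_eq Hxs).
by rewrite /= act_tsum List_mapE big_map.
Qed.

End Positivity.
End LeavittPathAlgebra.

Theorem mainTheorem11 (K : fieldType) (cj : {rmorphism K -> K})
  (V Ed : Type) (s r : Ed -> V) :
  is_involution cj -> inhabited V ->
  (lpa_pos_def (K:=K) s r cj <-> field_pos_def cj).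
Proof.
move=> cjK [v0]; split.
- exact: field_pos_def_of_lpa.
- exact: lpa_pos_def_of_field.
Qed.
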